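(* Let $K$ be a field and $X$ a finite connected poset. The center $Z$ of the Lie algebra $(J(I(X,K)),[\ ,\ ])$ is $$Z=\mathrm{span}_K\{e_{xy}: x<y,\ x\text{ is minimal in }X\text{ and } y \text{ is maximal in }X\}.$$
   Context: $I(X,K)$ is the incidence algebra: functions $f:X\times X\to K$ with $f(x,y)=0$ unless $x\le y$, product $(fg)(x,y)=\sum_{x\le t\le y}f(x,t)g(t,y)$; $e_{xy}$ ($x\le y$) is the function equal to $1$ at $(x,y)$ and $0$ elsewhere. $J(I(X,K))=\mathrm{span}_K\{e_{xy}:x<y\}$ is the Jacobson radical, and $[f,g]=fg-gf$. Connected means any two elements are joined by a sequence in which consecutive elements are in a covering relation. *)

From HB Require Import structures.
From mathcomp Require Import all_boot all_order all_algebra.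
Set Implicit Arguments. Unset Strict Implicit. Unset Printing Implicit Defensive.
Import Order.Theory GRing.Theory.
Local Open Scope ring_scope.

Definition incidence {d} {X : finPOrderType d} {K : fieldType}
  (f : X -> X -> K) : Prop := forall x y, ~~ (x <= y)%O -> f x y = 0.

Definition imul {d} {X : finPOrderType d} {K : fieldType}
  (f g : X -> X -> K) : X -> X -> K :=
  fun x y => \sum_(t : X | (x <= t)%O && (t <= y)%O) f x t * g t y.

Definition ibracket {d} {X : finPOrderType d} {K : fieldType}
  (f g : X -> X -> K) : X -> X -> K :=
  fun x y => imul f g x y - imul g f x y.

Definition ebasis {d} {X : finPOrderType d} {K : fieldType}
  (u v : X) : X -> X -> K :=
  fun x y => if (x == u) && (y == v) then 1 else 0.

Definition in_span {d} {X : finPOrderType d} {K : fieldType}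
  (P : X -> X -> bool) (f : X -> X -> K) : Prop :=
  exists c : X -> X -> K, forall x y,
    f x y = \sum_(u : X) \sum_(v : X | P u v) c u v * ebasis u v x y.

Definition jacobson {d} {X : finPOrderType d} {K : fieldType}
  (f : X -> X -> K) : Prop := in_span (fun u v : X => (u < v)%O) f.

Definition lie_center {d} {X : finPOrderType d} {K : fieldType}
  (f : X -> X -> K) : Prop :=
  jacobson f /\ forall g : X -> X -> K, jacobson g ->
    forall x y, ibracket f g x y = 0.

Definition minimal {d} {X : finPOrderType d} (x : X) : bool :=
  [forall z : X, ~~ (z < x)%O].
Definition maximal {d} {X : finPOrderType d} (x : X) : bool :=
  [forall z : X, ~~ (x < z)%O].

Definition covers {d} {X : finPOrderType d} (x y : X) : bool :=
  (x < y)%O && [forall z : X, ~~ ((x < z)%O && (z < y)%O)].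

Definition connected_poset {d} (X : finPOrderType d) : Prop :=
  forall a b : X, exists s : seq X,
    path (fun u v : X => covers u v || covers v u) a s /\ last a s = b.

From mathcomp Require Import all_boot all_order all_algebra.
Set Implicit Arguments. Unset Strict Implicit. Unset Printing Implicit Defensive.
Import Order.Theory GRing.Theory.
Local Open Scope ring_scope.

(* For x < y, bracketing f with e_yz (y < z) isolates f(x,y) at position (x,z), and
   bracketing with e_zx (z < x) isolates -f(x,y) at position (z,y); so a
   central f vanishes at (x,y) unless x is minimal and y is maximal.
   Conversely, if f is supported on minimal-to-maximal pairs, every term
   f(x,t) g(t,y) of fg and g(x,t) f(t,y) of gf vanishes for g in J, since
   nothing lies strictly above a maximal t or strictly below a minimal t. *)

Section IncidenceCenter.

Variables (K : fieldType) (d : Order.disp_t) (X : finPOrderType d).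
Implicit Types (f g : X -> X -> K) (P : X -> X -> bool) (u v x y : X).

Lemma sum_ebasis P (c : X -> X -> K) x y :
  \sum_(u : X) \sum_(v : X | P u v) c u v * ebasis u v x y =
  if P x y then c x y else 0.
Proof.
rewrite (bigD1 x) //= [X in _ + X]big1 ?addr0; last first.
  move=> u /negbTE ux; apply: big1 => v _.
  by rewrite /ebasis (eq_sym x) ux mulr0.
case: ifP => Pxy.
  rewrite (bigD1 y) //= [X in _ + X]big1 ?addr0 /ebasis ?eqxx ?mulr1 //.
  by move=> v /andP [_ /negbTE vy]; rewrite (eq_sym y) vy mulr0.
apply: big1 => v Pv; rewrite /ebasis eqxx /=.
by case: eqP => [yv | _]; [subst; rewrite Pv in Pxy | rewrite mulr0].
Qed.

Lemma in_spanP P f : in_span P f <-> forall x y, ~~ P x y -> f x y = 0.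
Proof.
split=> [[c fE] x y /negbTE nPxy | f0]; first by rewrite fE sum_ebasis nPxy.
by exists f => x y; rewrite sum_ebasis; case: ifP => // /negbT /f0.
Qed.

Lemma jacobson_ebasis u v : (u < v)%O -> jacobson (ebasis u v : X -> X -> K).
Proof.
move=> ltuv; apply/in_spanP => x y; rewrite /ebasis.
by case: eqP => [-> | //]; case: eqP => [-> | //]; rewrite ltuv.
Qed.

Lemma imul_ebasisl u v g x y : (u <= v)%O ->
  imul (ebasis u v) g x y = if (x == u) && (v <= y)%O then g v y else 0.
Proof.
move=> leuv; rewrite /imul /ebasis.
case: eqP => [-> | _] /=; last by rewrite big1 // => t _; rewrite mul0r.
case: ifP => levy; last first.
  apply: big1 => t /andP [_ leyt]; case: eqP => [tv | _]; last by rewrite mul0r.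
  by rewrite tv levy in leyt.
rewrite (bigD1 v) /=; last by rewrite leuv levy.
by rewrite eqxx mul1r big1 ?addr0 // => t /andP [_ /negbTE ->]; rewrite mul0r.
Qed.

Lemma imul_ebasisr u v f x y : (u <= v)%O ->
  imul f (ebasis u v) x y = if (y == v) && (x <= u)%O then f x u else 0.
Proof.
move=> leuv; rewrite /imul /ebasis.
case: (y =P v) => [-> | _] /=; last by rewrite big1 // => t _; rewrite andbF mulr0.
case: ifP => lexu; last first.
  apply: big1 => t /andP [lext _]; case: eqP => [tu | _]; last by rewrite mulr0.
  by rewrite tu lexu in lext.
rewrite (bigD1 u) /=; last by rewrite lexu leuv.
by rewrite !eqxx mulr1 big1 ?addr0 // => t /andP [_ /negbTE ->]; rewrite mulr0.
Qed.

Lemma lie_center_eq0_nonmaximal f x y :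
  lie_center f -> ~~ maximal y -> f x y = 0.
Proof.
move=> [/in_spanP fJ fZ] /forallPn [z]; rewrite negbK => ltyz.
have [ltxy | /fJ //] := boolP (x < y)%O.
have := fZ _ (jacobson_ebasis ltyz) x z.
rewrite /ibracket imul_ebasisr ?imul_ebasisl ?(ltW ltyz) // eqxx (ltW ltxy).
by rewrite (lt_eqF ltxy) subr0.
Qed.

Lemma lie_center_eq0_nonminimal f x y :
  lie_center f -> ~~ minimal x -> f x y = 0.
Proof.
move=> [/in_spanP fJ fZ] /forallPn [z]; rewrite negbK => ltzx.
have [ltxy | /fJ //] := boolP (x < y)%O.
have := fZ _ (jacobson_ebasis ltzx) z y.
rewrite /ibracket imul_ebasisr ?imul_ebasisl ?(ltW ltzx) // eqxx (ltW ltxy).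
by rewrite (gt_eqF ltxy) sub0r => /eqP; rewrite oppr_eq0 => /eqP.
Qed.

Lemma imul_eq0_maximal f g x y :
  (forall x t, ~~ maximal t -> f x t = 0) -> jacobson g -> imul f g x y = 0.
Proof.
move=> f0 /in_spanP gJ; apply: big1 => t _.
have [maxt | /f0 -> ] := boolP (maximal t); last by rewrite mul0r.
by rewrite gJ ?mulr0 //; move/forallP: maxt.
Qed.

Lemma imul_eq0_minimal f g x y :
  jacobson f -> (forall t y, ~~ minimal t -> g t y = 0) -> imul f g x y = 0.
Proof.
move=> /in_spanP fJ g0; apply: big1 => t _.
have [mint | /g0 -> ] := boolP (minimal t); last by rewrite mulr0.
by rewrite fJ ?mul0r //; move/forallP: mint.
Qed.

End IncidenceCenter.

Theorem proposition2p5 (K : fieldType) (d : Order.disp_t) (X : finPOrderType d) :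
  connected_poset X ->
  forall f : X -> X -> K,
    lie_center f <->
    in_span (fun u v : X => [&& (u < v)%O, minimal u & maximal v]) f.
Proof.
move=> _ f; split=> [fZ | /in_spanP f0].
  have [/in_spanP fJ _] := fZ; apply/in_spanP => x y.
  rewrite !negb_and => /or3P [/fJ // | | ].
    exact: lie_center_eq0_nonminimal.
  exact: lie_center_eq0_nonmaximal.
have fJ : jacobson f by apply/in_spanP => x y nlt; rewrite f0 // negb_and nlt.
have f0max x t : ~~ maximal t -> f x t = 0.
  by move=> nmax; rewrite f0 // !negb_and nmax !orbT.
have f0min t y : ~~ minimal t -> f t y = 0.
  by move=> nmin; rewrite f0 // !negb_and nmin orbT.
split=> // g gJ x y.
by rewrite /ibracket imul_eq0_maximal ?imul_eq0_minimal ?subrr.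
Qed.
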